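(* Fix $f\in\mathbb{N}$, $\ell=2f+1$. For a family of directed graphs $G=(V,E)$ with $n=|V|\to\infty$, each with a partition of $V$ into regions $R_1,\dots,R_k$, let $R=\max_{k'}|R_{k'}|$, $r=\min_{k'}|R_{k'}|$, and consider the region-based Byzantine reinforcement $G'$, $P$, $A'$ (as defined in the context). Let $F'\subseteq V'$ contain each node independently with probability $p=p(n)$ (Byzantine faults), and assume $Rp\in o(1)$. (a) If $p\in o\big((n/r)^{-1/(f+1)}/R\big)$, the reinforcement is valid under $\mathrm{Byz}(p)$: with probability $1-o(1)$, for every region $R_{k'}$ there are at least $f+1$ indices $i\in[\ell]$ with $\{v_i:v\in R_{k'}\}\cap F'=\emptyset$, and hence $A'$ simulates $A$. (b) If $G$ contains $\Omega(n)$ nodes with non-zero outdegree, $R\in O(1)$, and $p\in\omega(n^{-1/(f+1)})$, then with probability $1-o(1)$ some node with non-zero outdegree has more than $f$ faulty copies, and the reinforcement is not valid.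
   Context: Region-based Byzantine reinforcement: $V'=V\times[\ell]$, $v_i=(v,i)$, $P(v_i)=v$, $E'=\bigcup_{e\in E}E'_e$ with, for $e=(v,w)\in E$, $E'_e=\{(v_i,w_i):i\in[\ell]\}$ if $v,w$ are in the same region and $E'_e=\{(v_i,w_j):i,j\in[\ell]\}$ otherwise. In $A'$, each non-faulty $v'$ keeps a copy of the state of $P(v')$ under $A$, sends on each $(v',w')\in E'$ the message $P(v')$ would send on $(P(v'),P(w'))$, and updates its state as if $P(v')$ received from each in-neighbor $w$ the majority message among those sent to $v'$ by the copies $w'$ of $w$ with $(w',v')\in E'$. Synchronous network model with scheduling algorithm $A$ (each round: send messages on outgoing links based on state, update state from received messages and input). $\mathrm{Byz}(p)$: each node of $V'$ independently faulty with probability $p$, faulty nodes behaving arbitrarily. Simulation under $\mathrm{Byz}(p)$: for each $v\in V$ a strict majority of its copies compute in every round the state of $v$ in the fault-free execution of $A$ (non-faulty copies getting the same input as $v$). Valid: $A'$ simulates $A$ with probability $1-o(1)$ as $n\to\infty$ ($f$ fixed). *)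

From Stdlib Require Import Reals ClassicalEpsilon.
From mathcomp Require Import all_boot.
Set Implicit Arguments. Unset Strict Implicit. Unset Printing Implicit Defensive.

Definition ell (f : nat) : nat := (2 * f).+1.

Section Reinforcement.
Variables (V : finType) (E : rel V) (P : {set {set V}}) (f : nat).

Definition same_region (v w : V) : bool := pblock P v == pblock P w.

Definition E' (x y : V * 'I_(ell f)) : bool :=
  E x.1 y.1 && (if same_region x.1 y.1 then x.2 == y.2 else true).

Definition maxreg : nat := \max_(B in P) #|B|.
Definition minreg : nat := \big[minn/#|V|]_(B in P) #|B|.

Section Algorithm.
(* A synchronous algorithm A on G: states S, inputs I, messages M.
   send v w s : message sent on edge (v,w) when v is in state s.
   upd v s rcv i : new state of v from old state s, received messages
   (rcv w = Some m if w is an in-neighbour that sent m, None if no edge)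
   and input i. *)
Variables (S I : Type) (M : eqType) (init : V -> S) (send : V -> V -> S -> M)
  (upd : V -> S -> (V -> option M) -> I -> S).

Fixpoint run (inp : nat -> V -> I) (t : nat) : V -> S :=
  match t with
  | 0 => init
  | t'.+1 => fun v => upd v (run inp t' v)
      (fun w => if E w v then Some (send w v (run inp t' w)) else None) (inp t' v)
  end.

(* majority of a list of messages (strict majority if it exists,
   otherwise the tie-breaking default dflt) *)
Definition majority (dflt : M) (s : seq M) : M :=
  nth dflt s (find (fun m => size s < 2 * count_mem m s) s).

(* execution of A' with faulty set F, adversary adv (adv t y x = message
   sent by faulty y to x in round t), tie-break dflt, inputs inp.
   (The computed value of faulty nodes is irrelevant.) *)
Fixpoint run' (F : {set V * 'I_(ell f)})
  (adv : nat -> V * 'I_(ell f) -> V * 'I_(ell f) -> M) (dflt : M)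
  (inp : nat -> V -> I) (t : nat) : V * 'I_(ell f) -> S :=
  match t with
  | 0 => fun x => init x.1
  | t'.+1 => fun x =>
      let st := run' F adv dflt inp t' in
      let msg y := if y \in F then adv t' y x else send y.1 x.1 (st y) in
      upd x.1 (st x)
        (fun w => if E w x.1 then
           Some (majority dflt [seq msg y | y <- enum [set y | (y.1 == w) && E' y x]])
         else None)
        (inp t' x.1)
  end.

Definition simulates (F : {set V * 'I_(ell f)}) (dflt : M) : Prop :=
  forall (inp : nat -> V -> I) (adv : nat -> V * 'I_(ell f) -> V * 'I_(ell f) -> M),
  forall v : V, exists C : {set 'I_(ell f)}, (ell f < 2 * #|C|)%N /\
    forall i, i \in C -> (v, i) \notin F /\
      forall t, run' F adv dflt inp t (v, i) = run inp t v.

End Algorithm.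
End Reinforcement.

Definition Pr (T : finType) (p : R) (A : {set T} -> Prop) : R :=
  \big[Rplus/R0]_(F : {set T})
     (if excluded_middle_informative (A F)
      then Rmult (pow p #|F|) (pow (Rminus R1 p) (#|T| - #|F|)) else R0).

Definition valid (V : nat -> finType) (E : forall k, rel (V k))
  (P : forall k, {set {set V k}}) (f : nat) (p : nat -> R) : Prop :=
  forall (S I : nat -> Type) (M : nat -> eqType)
    (init : forall k, V k -> S k) (send : forall k, V k -> V k -> S k -> M k)
    (upd : forall k, V k -> S k -> (V k -> option (M k)) -> I k -> S k)
    (dflt : forall k, M k),
  Un_cv (fun k => Pr (p k) (fun F : {set V k * 'I_(ell f)} =>
     simulates (E k) (P k) (init k) (send k) (upd k) F (dflt k))) R1.

(* (a) A' simulates A as soon as every region has f+1 layers i whose copies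
   v_i of the region's nodes are all correct: inside a region copies are wired
   layer to layer, so a correct copy only hears correct copies; across regions
   a copy hears all l = 2f+1 copies of its in-neighbour, and the f+1 correct
   layers form a strict majority among them.  A region fails only if f+1 of its
   at most R l copies are faulty, so by the union bound over the at most n/r
   regions the failure probability is at most
   (n/r) (R l p)^(f+1) = l^(f+1) (p R (n/r)^(1/(f+1)))^(f+1) -> 0.
   (b) Let X count the nodes of non-zero outdegree whose first f+1 copies are
   all faulty.  These events are independent, so E X^2 <= E X + (E X)^2, and
   Chebyshev gives Pr(X = 0) <= 1/E X, where
   E X >= c n p^(f+1) = c (p n^(1/(f+1)))^(f+1) -> oo.  A node with more than f
   faulty copies has no strict majority of correct copies. *)

From HB Require Import structures.
From Stdlib Require Import Reals Lra Lia ClassicalEpsilon FunctionalExtensionality.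
From mathcomp Require Import all_boot order zify.

Set Implicit Arguments.
Unset Strict Implicit.
Unset Printing Implicit Defensive.

HB.instance Definition _ := Monoid.isComLaw.Build R R0 Rplus
  (fun a b c => esym (Rplus_assoc a b c)) Rplus_comm Rplus_0_l.
HB.instance Definition _ := Monoid.isComLaw.Build R R1 Rmult
  (fun a b c => esym (Rmult_assoc a b c)) Rmult_comm Rmult_1_l.
HB.instance Definition _ := Monoid.isMulLaw.Build R R0 Rmult Rmult_0_l Rmult_0_r.
HB.instance Definition _ :=
  Monoid.isAddLaw.Build R Rmult Rplus Rmult_plus_distr_r Rmult_plus_distr_l.

Section RealSums.
Local Open Scope R_scope.

Lemma prodR_const (T : finType) (A : {pred T}) (c : R) :
  \big[Rmult/R1]_(x in A) c = c ^ #|A|.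
Proof. by rewrite big_const; elim: #|A| => //= n ->. Qed.

Lemma sumR_const (T : finType) (A : {pred T}) (c : R) :
  \big[Rplus/R0]_(x in A) c = INR #|A| * c.
Proof.
rewrite big_const; elim: #|A| => [|n IH]; first by rewrite /=; lra.
by rewrite iterS IH S_INR; lra.
Qed.

Lemma sumR_ge0 (I : finType) (Q : pred I) (g : I -> R) :
  (forall i, Q i -> 0 <= g i) -> 0 <= \big[Rplus/R0]_(i | Q i) g i.
Proof. by move=> g_ge0; elim/big_ind: _ => // [|x y]; lra. Qed.

Lemma ler_sumR (I : finType) (Q : pred I) (g h : I -> R) :
  (forall i, Q i -> g i <= h i) ->
  \big[Rplus/R0]_(i | Q i) g i <= \big[Rplus/R0]_(i | Q i) h i.
Proof. by move=> le_gh; elim/big_ind2: _ => // [|*]; [lra|apply: Rplus_le_compat]. Qed.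

Lemma ler_sumR_term (I : finType) (Q : pred I) (g : I -> R) j :
  (forall i, Q i -> 0 <= g i) -> Q j -> g j <= \big[Rplus/R0]_(i | Q i) g i.
Proof.
move=> g_ge0 Qj; rewrite (bigD1 j) //=.
suff : 0 <= \big[Rplus/R0]_(i | Q i && (i != j)) g i by lra.
by apply: sumR_ge0 => i /andP [/g_ge0].
Qed.

Lemma sum_subsets_prod (T : finType) (h : T -> bool -> R) :
  \big[Rplus/R0]_(F : {set T}) \big[Rmult/R1]_(x : T) h x (x \in F)
  = \big[Rmult/R1]_(x : T) (h x true + h x false).
Proof.
rewrite (bigA_distr _ _ (fun x => h x true) (fun x => h x false)).
apply: (@eq_big R R0 Rplus) => [F|F _]; first by rewrite inE.
by apply: (@eq_big R R1 Rmult) => // x _; case: (x \in F).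
Qed.

Lemma INR_expn m n : INR (m ^ n)%N = INR m ^ n.
Proof. by elim: n => [|n IH] //=; rewrite expnS mult_INR IH. Qed.

End RealSums.

(** * The product measure Byz(p) on subsets *)

Section Bernoulli.
Local Open Scope R_scope.
Variables (T : finType) (p : R).
Hypothesis p01 : 0 <= p <= 1.
Implicit Types (A B : {set T} -> Prop) (g h : {set T} -> R).

Definition weight (F : {set T}) : R := p ^ #|F| * (1 - p) ^ (#|T| - #|F|).

Lemma weight_ge0 F : 0 <= weight F.
Proof. by apply: Rmult_le_pos; apply: pow_le; lra. Qed.

Lemma weight_prod F : weight F = \big[Rmult/R1]_(x : T) (if x \in F then p else 1 - p).
Proof.
rewrite (bigID (mem F)) /=.
rewrite [X in X * _](eq_bigr (fun _ => p)); last by move=> x ->.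
rewrite [X in _ * X](eq_bigr (fun _ => 1 - p)); last by move=> x /negbTE ->.
by rewrite !prodR_const /weight -(cardC (mem F)) addKn.
Qed.

Definition expect (g : {set T} -> R) : R := \big[Rplus/R0]_(F : {set T}) (weight F * g F).

Definition b2R (b : bool) : R := if b then 1 else 0.

Lemma b2R_ge0 b : 0 <= b2R b.
Proof. by case: b => /=; lra. Qed.

Lemma expect_subset (D : {set T}) : expect (fun F => b2R (D \subset F)) = p ^ #|D|.
Proof.
pose h x (b : bool) := if b then p else if x \in D then 0 else 1 - p.
transitivity (\big[Rplus/R0]_(F : {set T}) \big[Rmult/R1]_(x : T) h x (x \in F)).
  apply: eq_bigr => F _; rewrite weight_prod /b2R.
  have [DF|] := boolP (D \subset F).
    rewrite Rmult_1_r; apply: eq_bigr => x _; rewrite /h.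
    by case: (boolP (x \in F)) => // xF; rewrite (negbTE (contra (subsetP DF x) xF)).
  case/subsetPn => x xD xF; rewrite Rmult_0_r (bigD1 x) //= /h (negbTE xF) xD.
  by rewrite Rmult_0_l.
rewrite sum_subsets_prod (bigID (mem D)) /= [X in _ * X]big1; last first.
  by move=> x /negbTE xD; rewrite /h xD; lra.
rewrite Rmult_1_r -prodR_const; apply: eq_bigr => x xD; rewrite /h xD; lra.
Qed.

Lemma expect1 : expect (fun _ => 1) = 1.
Proof.
rewrite -[RHS](pow_O p) -(cards0 T) -expect_subset.
by apply: eq_bigr => F _; rewrite sub0set.
Qed.

Lemma expect_le g h : (forall F, g F <= h F) -> expect g <= expect h.
Proof. by move=> le_gh; apply: ler_sumR => F _; apply/Rmult_le_compat_l/le_gh/weight_ge0. Qed.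

Lemma expectD g h : expect (fun F => g F + h F) = expect g + expect h.
Proof. by rewrite /expect -big_split; apply: eq_bigr => F _ /=; lra. Qed.

Lemma expectZ c g : expect (fun F => c * g F) = c * expect g.
Proof. by rewrite /expect big_distrr; apply: eq_bigr => F _ /=; lra. Qed.

Lemma expect_sum (I : finType) (Q : pred I) (g : I -> {set T} -> R) :
  expect (fun F => \big[Rplus/R0]_(i | Q i) g i F)
  = \big[Rplus/R0]_(i | Q i) expect (g i).
Proof. by rewrite /expect -exchange_big; apply: eq_bigr => F _; rewrite big_distrr. Qed.

Definition ind (A : {set T} -> Prop) (F : {set T}) : R :=
  if excluded_middle_informative (A F) then 1 else 0.

Lemma Pr_expect A : Pr p A = expect (ind A).
Proof.
apply: eq_bigr => F _; rewrite /ind /weight (_ : R1 = 1) //.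
by case: excluded_middle_informative => ? /=; lra.
Qed.

Lemma Pr_le A B : (forall F, A F -> B F) -> Pr p A <= Pr p B.
Proof.
move=> AB; rewrite !Pr_expect; apply: expect_le => F; rewrite /ind.
do 2 case: excluded_middle_informative => //=; try lra.
by move=> nBF /AB.
Qed.

Lemma Pr_le1 A : Pr p A <= 1.
Proof.
rewrite Pr_expect -expect1; apply: expect_le => F; rewrite /ind.
by case: excluded_middle_informative => ? /=; lra.
Qed.

Lemma Pr_not A : Pr p A = 1 - Pr p (fun F => ~ A F).
Proof.
rewrite !Pr_expect -expect1.
suff -> : expect (fun _ => 1) = expect (fun F => ind A F + ind (fun F => ~ A F) F).
  by rewrite expectD; lra.
apply: eq_bigr => F _; rewrite /ind.
case: excluded_middle_informative => AF; case: excluded_middle_informative => nAF /=;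
  [by [] | lra | lra | by []].
Qed.

Lemma Pr_exists_subset_le (J : finType) (Q : pred J) (D : J -> {set T}) :
  Pr p (fun F => exists2 j, Q j & D j \subset F)
  <= \big[Rplus/R0]_(j | Q j) p ^ #|D j|.
Proof.
under eq_bigr => j _ do rewrite -expect_subset.
rewrite Pr_expect -expect_sum; apply: expect_le => F; rewrite /ind.
case: excluded_middle_informative => [[j Qj DF]|_] /=.
  by apply: Rle_trans (ler_sumR_term (fun i _ => b2R_ge0 _) Qj); rewrite DF /=; lra.
by apply: sumR_ge0 => j _; apply: b2R_ge0.
Qed.

(* Chebyshev's inequality for the event g = 0. *)
Lemma Pr_eq0_le (g : {set T} -> R) mu : 0 < mu -> expect g = mu ->
  expect (fun F => g F * g F) <= mu + mu * mu -> Pr p (fun F => g F = 0) <= / mu.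
Proof.
move=> mu_gt0 Eg Eg2.
pose h F := / (mu * mu) * (g F * g F + (- 2 * mu) * g F + mu * mu * 1).
have h_sq F : h F = / (mu * mu) * ((g F - mu) * (g F - mu)) by rewrite /h; field; lra.
have inv_mu2_gt0 : 0 < / (mu * mu) by apply/Rinv_0_lt_compat/Rmult_lt_0_compat.
rewrite Pr_expect; apply: (@Rle_trans _ (expect h)).
  apply: expect_le => F; rewrite /ind h_sq.
  case: excluded_middle_informative => [g0|_] /=; first by rewrite g0; right; field; lra.
  by apply: Rmult_le_pos; [lra|apply: Rle_0_sqr].
rewrite /h expectZ !expectD !expectZ expect1 Eg.
apply: (@Rle_trans _ (/ (mu * mu) * mu)); first by apply: Rmult_le_compat_l; lra.
by right; field; lra.
Qed.

Section DisjointSubsets.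
Variables (I : finType) (A : {set I}) (D : I -> {set T}) (m : nat).
Hypothesis card_D : forall i, #|D i| = m.
Hypothesis disjoint_D : forall i j, i != j -> [disjoint D i & D j].

Definition count_subsets (F : {set T}) : R := \big[Rplus/R0]_(i in A) b2R (D i \subset F).

Lemma expect_count_subsets : expect count_subsets = INR #|A| * p ^ m.
Proof.
rewrite expect_sum -sumR_const; apply: eq_bigr => i _.
by rewrite expect_subset card_D.
Qed.

(* Only the diagonal terms of the square are correlated. *)
Lemma expect_count_subsets_sq :
  expect (fun F => count_subsets F * count_subsets F)
  <= INR #|A| * p ^ m + INR #|A| * p ^ m * (INR #|A| * p ^ m).
Proof.
have -> : (fun F => count_subsets F * count_subsets F) = (fun F =>
    \big[Rplus/R0]_(i in A) \big[Rplus/R0]_(j in A) b2R (D i :|: D j \subset F)).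
  apply: functional_extensionality => F; rewrite /count_subsets big_distrl.
  apply: eq_bigr => i _; rewrite big_distrr; apply: eq_bigr => j _ /=.
  by rewrite subUset /b2R; do 2 case: (_ \subset F); rewrite /=; lra.
rewrite expect_sum.
apply: (@Rle_trans _ (\big[Rplus/R0]_(i in A) \big[Rplus/R0]_(j in A)
    ((if j == i then p ^ m else 0) + p ^ (m + m)))).
  apply: ler_sumR => i _; rewrite expect_sum; apply: ler_sumR => j _.
  rewrite expect_subset; have [->|ji] := eqVneq j i.
    by rewrite setUid card_D; have := pow_le p (m + m) (proj1 p01); lra.
  rewrite cardsU setIC (disjoint_setI0 (disjoint_D ji)) cards0 subn0 !card_D; lra.
rewrite pow_add; right.
rewrite (eq_bigr (fun _ => p ^ m + INR #|A| * (p ^ m * p ^ m))) ?sumR_const; first ring.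
move=> i iA; rewrite big_split /= sumR_const (bigD1 i) //= eqxx big1 ?Rplus_0_r //.
by move=> j /andP [_ /negbTE ->].
Qed.

Lemma Pr_no_subset_le : 0 < INR #|A| * p ^ m ->
  Pr p (fun F => forall i, i \in A -> ~ D i \subset F) <= / (INR #|A| * p ^ m).
Proof.
move=> mu_gt0; apply: Rle_trans (Pr_eq0_le mu_gt0 expect_count_subsets
  expect_count_subsets_sq); apply: Pr_le => F noD.
by rewrite /count_subsets big1 // => i /noD; rewrite /b2R; case: (_ \subset F).
Qed.

End DisjointSubsets.
End Bernoulli.

(** * Simulation by majority voting *)

Lemma mem_cover_partition (T : finType) (P : {set {set T}}) x :
  partition P [set: T] -> x \in cover P.
Proof. by case/and3P => /eqP ->; rewrite inE. Qed.

Lemma majority_eq (M : eqType) dflt (s : seq M) m :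
  size s < 2 * count_mem m s -> majority dflt s = m.
Proof.
move=> maj_m; rewrite /majority.
have has_maj : has (fun m' => size s < 2 * count_mem m' s) s.
  by apply/hasP; exists m => //; rewrite -has_pred1 has_count; lia.
have := nth_find dflt has_maj; set m' := nth dflt s _ => maj_m'.
apply/eqP; apply: contraT => m'm.
suff : count_mem m' s + count_mem m s <= size s by lia.
rewrite -count_predUI (@eq_count _ (predI _ _) pred0) ?count_pred0 ?addn0 ?count_size //.
by move=> x /=; case: (eqVneq x m') => // ->; rewrite (negbTE m'm).
Qed.

Lemma majority_map_enum (T : finType) (M : eqType) dflt (Y Z : {set T}) (msg : T -> M) m :
  Z \subset Y -> {in Z, forall y, msg y = m} -> #|Y| < 2 * #|Z| ->
  majority dflt [seq msg y | y <- enum Y] = m.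
Proof.
move=> ZY msgZ YZ; apply: majority_eq; rewrite size_map -cardE.
apply: leq_trans YZ _; rewrite leq_mul2l /= count_map.
have -> : #|Z| = count (mem Z) (enum Y).
  rewrite -size_filter -(card_uniqP (filter_uniq _ (enum_uniq Y))).
  by apply: eq_card => y; rewrite mem_filter mem_enum andb_idr //; apply: (subsetP ZY).
by apply: sub_count => y /msgZ /= ->.
Qed.

Section CorrectLayers.
Variables (V : finType) (P : {set {set V}}) (f : nat).

Definition correct_layers (F : {set V * 'I_(ell f)}) (B : {set V}) : {set 'I_(ell f)} :=
  [set i | [forall v in B, (v, i) \notin F]].

Definition regions_correct (F : {set V * 'I_(ell f)}) : Prop :=
  forall B, B \in P -> f < #|correct_layers F B|.

End CorrectLayers.

Section Simulation.
Variables (V : finType) (E : rel V) (P : {set {set V}}) (f : nat).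
Variables (S I : Type) (M : eqType) (init : V -> S) (send : V -> V -> S -> M)
  (upd : V -> S -> (V -> option M) -> I -> S).
Variables (F : {set V * 'I_(ell f)}) (dflt : M).
Hypothesis partP : partition P [set: V].
Hypothesis P_correct : regions_correct P F.

Let layers v := correct_layers F (pblock P v).

Definition in_copies (w : V) (x : V * 'I_(ell f)) : {set V * 'I_(ell f)} :=
  [set y | (y.1 == w) && E' E P y x].

Lemma layers_gt v : f < #|layers v|.
Proof. exact/P_correct/pblock_mem/mem_cover_partition. Qed.

Lemma notin_layers v i : i \in layers v -> (v, i) \notin F.
Proof. by rewrite inE => /forall_inP; apply; rewrite mem_pblock mem_cover_partition. Qed.

Lemma in_copies_majority w v i : E w v -> i \in layers v ->
  #|in_copies w (v, i)| < 2 * #|[set y in in_copies w (v, i) | y.2 \in layers w]|.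
Proof.
move=> Ewv iv; set Z := [set y in _ | _].
have [sr|nsr] := boolP (same_region P w v).
  have -> : in_copies w (v, i) = [set (w, i)].
    apply/setP => -[u j]; rewrite !inE /E' /= xpair_eqE.
    by case: eqVneq => [->|] //=; rewrite Ewv sr.
  have wiZ : (w, i) \in Z.
    rewrite /Z; have -> : layers w = layers v by rewrite /layers (eqP sr).
    by rewrite inE /= iv andbT inE /E' /= eqxx Ewv sr eqxx.
  rewrite (cards1 ((w, i) : V * 'I_(ell f))).
  have : 0 < #|Z| by apply/card_gt0P; exists (w, i).
  lia.
have pair_inj : injective (@pair V 'I_(ell f) w) by move=> a b [].
have le_Y : #|in_copies w (v, i)| <= ell f.
  apply: (@leq_trans #|(@pair V _ w) @: 'I_(ell f)|).
    apply/subset_leq_card/subsetP => -[u j]; rewrite inE => /andP [/eqP /= -> _].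
    exact: imset_f.
  by rewrite -[X in _ <= X]card_ord leq_imset_card.
have ge_Z : #|layers w| <= #|Z|.
  rewrite -(card_imset _ pair_inj); apply/subset_leq_card/subsetP => y /imsetP [j jw ->].
  by rewrite /Z in_set /= jw andbT inE /E' /= eqxx Ewv (negbTE nsr).
apply: leq_ltn_trans le_Y _; have := leq_trans (layers_gt w) ge_Z; rewrite /ell; lia.
Qed.

Lemma run'_correct inp adv t v i : i \in layers v ->
  run' E P init send upd F adv dflt inp t (v, i) = run E init send upd inp t v.
Proof.
elim: t v i => [//|t IH] v i iv /=.
rewrite IH //; congr (upd _ _ _ _); apply: functional_extensionality => w.
case Ewv: (E w v) => //; congr Some.
apply: (@majority_map_enum _ _ _ _ [set y in in_copies w (v, i) | y.2 \in layers w]).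
- by apply/subsetP => y; rewrite inE => /andP [].
- move=> [u j]; rewrite in_set /= => /andP [+ jw].
  rewrite in_set => /andP [/eqP /= -> _].
  by rewrite (negbTE (notin_layers jw)) IH.
- exact: in_copies_majority.
Qed.

Lemma regions_correct_simulates : simulates E P init send upd F dflt.
Proof.
move=> inp adv v; exists (layers v); split; first by have := layers_gt v; rewrite /ell; lia.
by move=> i iv; split; [apply: notin_layers | move=> t; apply: run'_correct].
Qed.

End Simulation.

(** * Part (a): the union bound *)

Lemma bin_leq_exp n k : 'C(n, k) <= n ^ k.
Proof.
apply: leq_trans (leq_pmulr _ (fact_gt0 k)) _; rewrite bin_ffact.
by elim: k => // k IH; rewrite ffactnSr expnS mulnC leq_mul ?leq_subr.
Qed.

Section RegionFailure.
Variables (V : finType) (P : {set {set V}}) (f : nat).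

Definition copies (B : {set V}) : {set V * 'I_(ell f)} := setX B [set: 'I_(ell f)].

Definition faulty_draws (B : {set V}) : {set {set V * 'I_(ell f)}} :=
  [set D : {set V * 'I_(ell f)} | D \subset copies B & #|D| == f.+1].

Lemma not_regions_correct_draw (F : {set V * 'I_(ell f)}) : ~ regions_correct P F ->
  exists2 BD : {set V} * {set V * 'I_(ell f)},
    (BD.1 \in P) && (BD.2 \in faulty_draws BD.1) & BD.2 \subset F.
Proof.
move=> notP.
have [B BP few_layers] : exists2 B, B \in P & #|correct_layers F B| <= f.
  apply: NNPP => noB; apply: notP => B BP; rewrite ltnNge; apply/negP => few.
  by apply: noB; exists B.
set D0 := F :&: copies B.
have many_faulty : f.+1 <= #|D0|.
  have : ~: correct_layers F B \subset [set x.2 | x in D0].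
    apply/subsetP => i; rewrite !inE => /forall_inPn [v vB /negPn vF].
    by apply/imsetP; exists (v, i) => //; rewrite !inE vF vB.
  move/subset_leq_card/leq_trans/(_ (leq_imset_card _ _)) => le_D0.
  have := cardsC (correct_layers F B); rewrite card_ord => card_L.
  apply: leq_trans le_D0; rewrite -(ltn_add2l #|correct_layers F B|) card_L.
  by rewrite ltnS mul2n -addnn leq_add2r.
have : 0 < #|[set D : {set V * 'I_(ell f)} | D \subset D0 & #|D| == f.+1]|.
  by rewrite cards_draws bin_gt0.
case/card_gt0P => D; rewrite inE => /andP [DD0 card_D].
exists (B, D); last exact: subset_trans DD0 (subsetIl _ _).
by rewrite /= BP inE card_D (subset_trans DD0 (subsetIr _ _)).
Qed.

Section UnionBound.
Local Open Scope R_scope.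

Lemma Pr_not_regions_correct_le p : 0 <= p <= 1 ->
  Pr p (fun F : {set V * 'I_(ell f)} => ~ regions_correct P F)
  <= INR #|P| * (INR (maxreg P * ell f) * p) ^ f.+1.
Proof.
move=> p01; apply: Rle_trans (Pr_le p01 (@not_regions_correct_draw)) _.
apply: Rle_trans (Pr_exists_subset_le p01 _ _) _.
rewrite -(pair_big_dep (fun B => B \in P) (fun B D => D \in faulty_draws B)
  (fun _ D => p ^ #|D|)).
rewrite -sumR_const; apply: ler_sumR => B BP.
rewrite (eq_bigr (fun _ => p ^ f.+1)) ?sumR_const; last first.
  by move=> D; rewrite inE => /andP [_ /eqP ->].
rewrite Rpow_mult_distr -INR_expn; apply: Rmult_le_compat_r; first by apply: pow_le; lra.
apply/le_INR/leP; rewrite cards_draws cardsX cardsT card_ord.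
apply: leq_trans (bin_leq_exp _ _) _; rewrite leq_exp2r // leq_mul2r.
by rewrite leq_bigmax_cond ?orbT.
Qed.

End UnionBound.
End RegionFailure.

(** * Part (b): the second moment method *)

Lemma ellE f : ell f = (2 * f).+1.
Proof. by []. Qed.

Lemma leq_ell f : f.+1 <= ell f.
Proof. by rewrite ellE; lia. Qed.

Section Overload.
Variables (V : finType) (E : rel V) (f : nat).

Definition senders : {set V} := [set v | [exists w, E v w]].

Definition faulty_layers (F : {set V * 'I_(ell f)}) (v : V) : {set 'I_(ell f)} :=
  [set i | (v, i) \in F].

Definition overloaded_sender (F : {set V * 'I_(ell f)}) : Prop :=
  exists v, (exists w, E v w) /\ f < #|faulty_layers F v|.

Definition first_copies (v : V) : {set V * 'I_(ell f)} :=
  [set (v, widen_ord (leq_ell f) i) | i : 'I_f.+1].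

Lemma card_first_copies v : #|first_copies v| = f.+1.
Proof. by rewrite card_imset ?card_ord // => i j [] /val_inj. Qed.

Lemma first_copies_disjoint v u : v != u -> [disjoint first_copies v & first_copies u].
Proof.
move=> vu; apply/pred0P => -[a b] /=; apply/andP => -[/imsetP [i _ [-> _]]].
by case/imsetP => j _ [vu' _]; rewrite vu' eqxx in vu.
Qed.

Lemma first_copies_overloaded (F : {set V * 'I_(ell f)}) v :
  v \in senders -> first_copies v \subset F -> overloaded_sender F.
Proof.
rewrite inE => /existsP [w Evw] vF; exists v; split; first by exists w.
have : first_copies v \subset pair v @: faulty_layers F v.
  apply/subsetP => x /imsetP [i _ ->]; apply: imset_f; rewrite inE.
  by apply: (subsetP vF); apply: imset_f.
move/subset_leq_card; rewrite card_first_copies card_imset //.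
by move=> a b [].
Qed.

Lemma simulates_not_overloaded (P : {set {set V}}) (S I : Type) (M : eqType)
  (init : V -> S) (send : V -> V -> S -> M) (upd : V -> S -> (V -> option M) -> I -> S)
  (F : {set V * 'I_(ell f)}) (dflt : M) (inp : nat -> V -> I) :
  simulates E P init send upd F dflt -> ~ overloaded_sender F.
Proof.
move=> sim [v [_ many_faulty]].
have [C [maj_C correct_C]] := sim inp (fun _ _ _ => dflt) v.
have le_C : #|C| <= #|~: faulty_layers F v|.
  by apply/subset_leq_card/subsetP => i /correct_C [vi _]; rewrite !inE.
have card_L : #|faulty_layers F v| + #|~: faulty_layers F v| = ell f.
  by rewrite cardsC card_ord.
by have := ellE f; lia.
Qed.

Section OverloadProbability.
Local Open Scope R_scope.

Lemma Pr_not_overloaded_le p : 0 <= p <= 1 -> 0 < INR #|senders| * p ^ f.+1 ->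
  Pr p (fun F => ~ overloaded_sender F) <= / (INR #|senders| * p ^ f.+1).
Proof.
move=> p01 mu_gt0.
apply: Rle_trans (Pr_no_subset_le p01 card_first_copies first_copies_disjoint mu_gt0).
by apply: Pr_le => // F noF v vS vF; apply: noF; apply: first_copies_overloaded vS vF.
Qed.

End OverloadProbability.
End Overload.

(** * Asymptotics *)

Section RegionSizes.
Variables (V : finType) (P : {set {set V}}).
Hypothesis partP : partition P [set: V].
Hypothesis V_gt0 : 0 < #|V|.

Lemma minreg_le B : B \in P -> minreg P <= #|B|.
Proof. exact: (@Order.TotalTheory.bigmin_le_cond _ nat _ #|V| B (mem P) (fun B => #|B|)). Qed.

Lemma minreg_gt0 : 0 < minreg P.
Proof.
have B_gt0 B : B \in P -> 0 < #|B|.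
  by move=> BP; rewrite card_gt0; apply: contraTneq BP => ->; case/and3P: partP.
exact: (@Order.POrderTheory.le_bigmin _ nat _ (index_enum _) (fun B : {set V} => #|B|)
  #|V| 1 (mem P) V_gt0 B_gt0).
Qed.

Lemma maxreg_gt0 : 0 < maxreg P.
Proof.
have /card_gt0P [v _] := V_gt0.
apply: leq_trans (leq_bigmax_cond _ (pblock_mem (mem_cover_partition v partP))).
by apply/card_gt0P; exists v; rewrite mem_pblock mem_cover_partition.
Qed.

Lemma card_partition_minreg : #|P| * minreg P <= #|V|.
Proof.
rewrite -cardsT (card_partition partP) -sum_nat_const.
by apply: leq_sum => B; apply: minreg_le.
Qed.

End RegionSizes.

Section Limits.
Local Open Scope R_scope.

Lemma Un_cv_squeeze1 (u b : nat -> R) N :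
  (forall k, (k >= N)%coq_nat -> 1 - b k <= u k <= 1) -> Un_cv b 0 -> Un_cv u 1.
Proof.
move=> u_bounds b0 eps eps_gt0; have [N1 b_small] := b0 eps eps_gt0.
exists (Nat.max N N1) => k kN; have := u_bounds k ltac:(lia).
have := b_small k ltac:(lia); rewrite /R_dist Rminus_0_r => /Rabs_def2 b_eps u_k.
by apply: Rabs_def1; lra.
Qed.

Lemma Un_cv_scal0 (a : nat -> R) c : Un_cv a 0 -> Un_cv (fun k => c * a k) 0.
Proof.
move=> a0; rewrite -(Rmult_0_r c); apply: CV_mult a0.
by move=> eps eps_gt0; exists O => k _; rewrite /R_dist Rminus_diag Rabs_R0.
Qed.

Lemma Un_cv_pow0 (a : nat -> R) m : Un_cv a 0 -> Un_cv (fun k => a k ^ m.+1) 0.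
Proof.
move=> a0; elim: m => [|m IH]; first by apply: Un_cv_ext a0 => k; rewrite /= Rmult_1_r.
by have := CV_mult _ _ _ _ a0 IH; rewrite Rmult_0_l.
Qed.

Lemma cv_infty_scal (u : nat -> R) c : 0 < c -> cv_infty u -> cv_infty (fun k => c * u k).
Proof.
move=> c_gt0 u_infty M; have [N u_big] := u_infty (M / c).
exists N => k /u_big; have : M = c * (M / c) by field; lra.
nra.
Qed.

Lemma Un_cv1_of_cv_infty (u v : nat -> R) N : cv_infty u ->
  (forall k, (k >= N)%coq_nat -> 1 - / u k <= v k) -> (forall k, v k <= 1) -> Un_cv v 1.
Proof.
move=> u_infty v_lb v_le1 eps eps_gt0.
have [N1 u_big] := u_infty (Rmax 1 (/ eps)).
exists (Nat.max N N1) => k kN; have := u_big k ltac:(lia).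
have := Rmax_l 1 (/ eps); have := Rmax_r 1 (/ eps) => ge_inv ge1 u_k.
have inv_u : / u k < eps.
  rewrite -(Rinv_inv eps); apply: Rinv_lt_contravar; last lra.
  by apply: Rmult_lt_0_compat; [apply: Rinv_0_lt_compat|lra].
have := v_lb k ltac:(lia); have := v_le1 k => ? ?.
by rewrite /R_dist; apply: Rabs_def1; lra.
Qed.

Lemma Un_cv1_sum_gt1 (a b : nat -> R) : Un_cv a 1 -> Un_cv b 1 ->
  exists k, 1 < a k + b k.
Proof.
move=> a1 b1; have [N1 a_near] := a1 (1 / 4) ltac:(lra).
have [N2 b_near] := b1 (1 / 4) ltac:(lra).
exists (Nat.max N1 N2); have := a_near (Nat.max N1 N2) ltac:(lia).
have := b_near (Nat.max N1 N2) ltac:(lia); rewrite /R_dist.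
by move=> /Rabs_def2 ? /Rabs_def2 ?; lra.
Qed.

Lemma Rpower_inv_pow x m : 0 < x -> Rpower x (/ (INR m + 1)) ^ m.+1 = x.
Proof.
move=> x_gt0; rewrite -Rpower_pow; last exact: exp_pos.
rewrite Rpower_mult S_INR Rinv_l ?Rpower_1 //; have := pos_INR m; lra.
Qed.

End Limits.

Section Rates.
Local Open Scope R_scope.

Lemma Pr_not_regions_correct_rate (V : finType) (P : {set {set V}}) f p :
  0 <= p <= 1 -> partition P [set: V] -> (0 < #|V|)%N ->
  Pr p (fun F : {set V * 'I_(ell f)} => ~ regions_correct P F)
  <= INR (ell f) ^ f.+1 * (p / (Rpower (INR #|V| / INR (minreg P)) (- / (INR f + 1))
                              / INR (maxreg P))) ^ f.+1.
Proof.
move=> p01 partP V_gt0; apply: Rle_trans (Pr_not_regions_correct_le P f p01) _.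
set n := INR #|V|; set r := INR (minreg P); set R := INR (maxreg P).
have r_gt0 : 0 < r by apply/lt_0_INR/ltP/minreg_gt0.
have R_gt0 : 0 < R by apply/lt_0_INR/ltP/maxreg_gt0.
have n_gt0 : 0 < n by apply/lt_0_INR/ltP.
set y := Rpower (n / r) (/ (INR f + 1)).
have y_gt0 : 0 < y by apply: exp_pos.
have y_pow : y ^ f.+1 = n / r by apply/Rpower_inv_pow/Rdiv_lt_0_compat.
have card_P : INR #|P| <= n / r.
  apply: (Rmult_le_reg_r r) => //; rewrite /Rdiv Rmult_assoc Rinv_l; last lra.
  by rewrite Rmult_1_r -mult_INR; apply/le_INR/leP/card_partition_minreg.
rewrite Rpower_Ropp -/y -Rpow_mult_distr mult_INR -/R.
rewrite (_ : INR (ell f) * (p / (/ y / R)) = y * (R * INR (ell f) * p)); last by field; lra.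
rewrite [X in _ <= X]Rpow_mult_distr y_pow; apply: Rmult_le_compat_r card_P.
by apply: pow_le; apply: Rmult_le_pos; [apply: Rmult_le_pos; apply: pos_INR|lra].
Qed.

Lemma Pr_overloaded_rate (V : finType) (E : rel V) f p c :
  0 <= p <= 1 -> 0 < c -> (0 < #|V|)%N -> c * INR #|V| <= INR #|senders E| ->
  1 <= p / Rpower (INR #|V|) (- / (INR f + 1)) ->
  1 - / (c * (p / Rpower (INR #|V|) (- / (INR f + 1))))
  <= Pr p (fun F : {set V * 'I_(ell f)} => overloaded_sender E F).
Proof.
move=> p01 c_gt0 V_gt0 many_senders.
set n := INR #|V|; have n_gt0 : 0 < n by apply/lt_0_INR/ltP.
set y := Rpower n (/ (INR f + 1)).
have y_gt0 : 0 < y by apply: exp_pos.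
rewrite Rpower_Ropp -/y (_ : p / / y = p * y); last by field; lra.
set z := p * y => z_ge1.
have z_pow : z ^ f.+1 = p ^ f.+1 * n by rewrite /z Rpow_mult_distr Rpower_inv_pow.
have z_le : z <= z ^ f.+1.
  by rewrite -[X in X <= _]Rmult_1_r /=; apply: Rmult_le_compat_l; [lra|apply: pow_R1_Rle].
set mu := INR #|senders E| * p ^ f.+1.
have mu_ge : c * z <= mu.
  have := Rmult_le_compat_r _ _ _ (pow_le p f.+1 (proj1 p01)) many_senders.
  have : c * z <= c * (p ^ f.+1 * n) by rewrite -z_pow; apply: Rmult_le_compat_l; lra.
  by rewrite /mu /n; lra.
have inv_mu : / mu <= / (c * z) by apply: Rinv_le_contravar; nra.
have := @Pr_not_overloaded_le V E f p p01 ltac:(rewrite -/mu; nra).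
by rewrite (Pr_not p (fun F : {set V * 'I_(ell f)} => overloaded_sender E F)) -/mu; lra.
Qed.

End Rates.

Unset Implicit Arguments.
Local Open Scope R_scope.

Section Validity.
Variables (f : nat) (V : nat -> finType) (E : forall k, rel (V k))
  (P : forall k, {set {set V k}}) (p : nat -> R).
Hypothesis n_infty : cv_infty (fun k => INR #|V k|).
Hypothesis p01 : forall k, 0 <= p k <= 1.

Lemma eventually_V_gt0 : exists N, forall k, (k >= N)%coq_nat -> (0 < #|V k|)%N.
Proof.
have [N n_pos] := n_infty 0; exists N => k /n_pos n_gt0.
by apply/ltP/INR_lt.
Qed.

Lemma reinforcement_valid : (forall k, partition (P k) [set: V k]) ->
  Un_cv (fun k => p k / (Rpower (INR #|V k| / INR (minreg (P k)))
                                (- / (INR f + 1)) / INR (maxreg (P k)))) 0 ->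
  Un_cv (fun k => Pr (p k) (fun F : {set V k * 'I_(ell f)} => regions_correct (P k) F)) 1
  /\ valid E P f p.
Proof.
move=> partP rate; have [N V_gt0] := eventually_V_gt0.
set b := fun k => INR (ell f) ^ f.+1 * (p k / (Rpower (INR #|V k| / INR (minreg (P k)))
                              (- / (INR f + 1)) / INR (maxreg (P k)))) ^ f.+1.
have b0 : Un_cv b 0 by apply/Un_cv_scal0/Un_cv_pow0.
have correct_whp k : (k >= N)%coq_nat ->
    1 - b k <= Pr (p k) (fun F : {set V k * 'I_(ell f)} => regions_correct (P k) F) <= 1.
  move=> kN; split; last exact: Pr_le1.
  rewrite Pr_not; have := Pr_not_regions_correct_rate f (p01 k) (partP k) (V_gt0 k kN).
  by rewrite -/(b k); lra.
split=> [|S I M init send upd dflt]; first exact: Un_cv_squeeze1 correct_whp b0.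
apply: (@Un_cv_squeeze1 _ _ N _ b0) => k kN; split; last exact: Pr_le1.
apply: Rle_trans (proj1 (correct_whp k kN)) (Pr_le (p01 k) _) => F.
exact: regions_correct_simulates.
Qed.

Lemma reinforcement_invalid :
  (exists c, 0 < c /\ exists N : nat, forall k, (N <= k)%N ->
     c * INR #|V k| <= INR #|senders (E k)|) ->
  cv_infty (fun k => p k / Rpower (INR #|V k|) (- / (INR f + 1))) ->
  Un_cv (fun k => Pr (p k) (fun F : {set V k * 'I_(ell f)} => overloaded_sender (E k) F)) 1
  /\ ~ valid E P f p.
Proof.
move=> [c [c_gt0 [N1 many_senders]]] z_infty.
have [N0 V_gt0] := eventually_V_gt0; have [Nz z_ge1] := z_infty 1.
have overloaded_whp : Un_cv (fun k => Pr (p k)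
    (fun F : {set V k * 'I_(ell f)} => overloaded_sender (E k) F)) 1.
  apply: (Un_cv1_of_cv_infty (N := Nat.max (Nat.max N0 N1) Nz) (cv_infty_scal c_gt0 z_infty))
    => [k kN|k]; last exact: Pr_le1.
  apply: Pr_overloaded_rate; rewrite ?p01 ?c_gt0 //.
  - by apply: V_gt0; lia.
  - by apply: many_senders; apply/leP; lia.
  - by apply: Rlt_le; apply: z_ge1; lia.
split=> // valid_p.
have sim_whp := valid_p (fun _ => unit) (fun _ => unit) (fun _ => bool)
  (fun _ _ => tt) (fun _ _ _ _ => true) (fun _ _ _ _ _ => tt) (fun _ => true).
have [k] := Un_cv1_sum_gt1 sim_whp overloaded_whp; apply: Rle_not_lt.
set not_overloaded := fun F : {set V k * 'I_(ell f)} => ~ overloaded_sender (E k) F.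
rewrite [X in _ + X]Pr_not -/not_overloaded.
apply: (@Rle_trans _ (Pr (p k) not_overloaded + (1 - Pr (p k) not_overloaded))); last lra.
apply: Rplus_le_compat_r; apply: (Pr_le (p01 k)) => F.
exact: (simulates_not_overloaded (fun _ _ => tt)).
Qed.

End Validity.

Theorem theorem9 (f : nat) (V : nat -> finType) (E : forall k, rel (V k))
  (P : forall k, {set {set V k}}) (p : nat -> R) :
  cv_infty (fun k => INR #|V k|) ->
  (forall k, partition (P k) [set: V k]) ->
  (forall k, 0 <= p k <= 1) ->
  Un_cv (fun k => INR (maxreg (P k)) * p k) 0 ->
  ( Un_cv (fun k => p k / (Rpower (INR #|V k| / INR (minreg (P k)))
                                  (- / (INR f + 1)) / INR (maxreg (P k)))) 0 ->
    Un_cv (fun k => Pr (p k) (fun F : {set V k * 'I_(ell f)} =>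
        forall B, B \in P k ->
          (f < #|[set i : 'I_(ell f) | [forall v in B, (v, i) \notin F]]|)%N)) 1
    /\ valid E P f p )
  /\
  ( (exists c : R, 0 < c /\ exists N : nat, forall k, (N <= k)%N ->
        c * INR #|V k| <= INR #|[set v : V k | [exists w, E k v w]]|) ->
    (exists (C : R) (N : nat), forall k, (N <= k)%N -> INR (maxreg (P k)) <= C) ->
    cv_infty (fun k => p k / Rpower (INR #|V k|) (- / (INR f + 1))) ->
    Un_cv (fun k => Pr (p k) (fun F : {set V k * 'I_(ell f)} =>
        exists v : V k, (exists w, E k v w) /\
          (f < #|[set i : 'I_(ell f) | (v, i) \in F]|)%N)) 1
    /\ ~ valid E P f p ).
Proof.
move=> n_infty partP p01 _; split.
  exact: reinforcement_valid.
move=> many_senders _; exact: reinforcement_invalid.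
Qed.
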